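(* If an infinite binary word $w$ is not weak abelian periodic, then the frequencies of letters in $w$ exist.
   Context: For a finite word $u$, $|u|_a$ is the number of occurrences of the letter $a$ in $u$, and $\rho_a(u)=|u|_a/|u|$ for nonempty $u$. The frequency of a letter $a$ in an infinite word $w$ is $\lim_{n\to\infty}\rho_a(\mathrm{pref}_n(w))$ (if it exists), with $\mathrm{pref}_n(w)$ the prefix of length $n$. An infinite word $w$ over $\Sigma$ is weak abelian periodic if $w=v_0v_1v_2\cdots$ with $v_0$ finite and $v_1,v_2,\dots$ nonempty finite words such that $\rho_a(v_i)=\rho_a(v_j)$ for all $a\in\Sigma$ and all $i,j\ge1$. *)

From mathcomp Require Import all_boot all_order all_algebra.
From mathcomp Require Import all_classical all_reals all_analysis.
Set Implicit Arguments. Unset Strict Implicit. Unset Printing Implicit Defensive.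
Import Order.TTheory GRing.Theory Num.Theory.
Import numFieldNormedType.Exports.
Local Open Scope classical_set_scope.
Local Open Scope ring_scope.

Definition infword (T : Type) := nat -> T.

Definition pref (T : Type) (n : nat) (w : infword T) : seq T :=
  [seq w i | i <- iota 0 n].

Definition occ (T : eqType) (a : T) (u : seq T) : nat := count_mem a u.

(* rho_a(u) = |u|_a / |u| (meaningful for nonempty u). *)
Definition rho (R : realType) (T : eqType) (a : T) (u : seq T) : R :=
  (occ a u)%:R / (size u)%:R.

(* The frequency of a in w exists: lim_{n->oo} rho_a(pref_n w) exists
   (n ranges over positive lengths, pref_{n+1}). *)
Definition freq_exists (R : realType) (T : eqType) (a : T) (w : infword T) : Prop :=
  exists l : R, (fun n : nat => rho R a (pref n.+1 w)) @ \oo --> l.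

(* w = v_0 v_1 v_2 ... : for every k, the prefix of w of length
   |v_0 ... v_k| equals v_0 ... v_k. *)
Definition is_factorization (T : Type) (w : infword T) (v : nat -> seq T) : Prop :=
  forall k : nat,
    pref (\sum_(i < k.+1) size (v i))%N w = flatten [seq v i | i <- iota 0 k.+1].

Definition weak_abelian_periodic (R : realType) (T : eqType) (w : infword T) : Prop :=
  exists v : nat -> seq T,
    is_factorization w v /\
    (forall i, (1 <= i)%N -> v i != [::]) /\
    (forall (a : T) (i j : nat), (1 <= i)%N -> (1 <= j)%N ->
        rho R a (v i) = rho R a (v j)).

(** Fix a rational threshold [k/q] with [q > 0]. The sequences [q |u_t|_a]
    and [k t], [u_t] the prefix of length [t], both grow by at most [q] per
    step, so if their order changes infinitely often then their difference
    falls into the window [[0, q)] infinitely often, hence takes one value [r]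
    infinitely often. Cutting [w] at these times yields factors with exactly
    [k] occurrences of [a] per [q] letters, i.e. a weak abelian period. So for
    a word that is not weak abelian periodic, the side of every threshold [k/q]
    on which [rho_a(u_t)] lies is eventually constant; taking [q > 1/e], all
    late densities lie in one interval of length [1/q], and the densities form
    a Cauchy sequence. *)

From mathcomp Require Import all_boot all_order all_algebra.
From mathcomp Require Import all_classical all_reals all_analysis.
From mathcomp Require Import zify lra.
Set Implicit Arguments. Unset Strict Implicit. Unset Printing Implicit Defensive.
Import Order.TTheory GRing.Theory Num.Theory.
Import numFieldNormedType.Exports.

Definition infinitely_often (P : nat -> Prop) : Prop :=
  forall N, exists2 t, (N <= t)%N & P t.

Lemma infinitely_often_pigeonhole (P : nat -> nat -> Prop) (q : nat) :
  infinitely_often (fun t => exists2 r, (r < q)%N & P r t) ->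
  exists2 r, (r < q)%N & infinitely_often (P r).
Proof.
elim: q => [|q IH] Pinf; first by have [t _ []] := Pinf 0%N.
have [Pq_inf|Pq_fin] := pselect (infinitely_often (P q)); first by exists q.
have [N0 notPq] : exists N0, forall t, (N0 <= t)%N -> ~ P q t.
  apply: contra_notP Pq_fin => noN0 N; apply: contra_notP noN0 => noP.
  by exists N => t Nt Pt; apply: noP; exists t.
have [r rq Pr_inf] : exists2 r, (r < q)%N & infinitely_often (P r).
  apply: IH => N; have [t Nt [r rq Prt]] := Pinf (maxn N N0).
  exists t; first by lia.
  exists r => //; move: rq; rewrite ltnS leq_eqVlt => /predU1P[rq|//].
  by subst r; case: (notPq t) => //; lia.
by exists r => //; apply: ltnW.
Qed.

Lemma infinitely_often_chain (P : nat -> Prop) :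
  infinitely_often P ->
  exists2 T : nat -> nat, (forall i, T i < T i.+1)%N & forall i, P (T i).
Proof.
move=> Pinf; pose f N := s2val (cid2 (Pinf N)).
have f_ge N : (N <= f N)%N by rewrite /f; case: cid2.
have Pf N : P (f N) by rewrite /f; case: cid2.
by exists (fun i => iter i (fun t => f t.+1) (f 0%N)) => [i|[|i]] //=; apply: f_ge.
Qed.

Lemma crossing_window (A B : nat -> nat) (q i j : nat) :
  (forall t, A t <= A t.+1 <= A t + q)%N ->
  (forall t, B t <= B t.+1 <= B t + q)%N ->
  (i <= j)%N -> (B i <= A i)%N != (B j <= A j)%N ->
  exists2 t, (i <= t)%N & (B t <= A t < B t + q)%N.
Proof.
move=> stepA stepB /subnKC <-; elim: (j - i) => [|d IH]; first by rewrite addn0 eqxx.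
rewrite addnS; have [/IH //|] := boolP ((B i <= A i)%N != (B (i + d) <= A (i + d))%N).
rewrite negbK => /eqP -> side_ch.
have := stepA (i + d); have := stepB (i + d).
case: (leqP (B (i + d)) (A (i + d))) side_ch => h1 /=;
  case: (leqP (B (i + d).+1) (A (i + d).+1)) => h2 //= _ /andP[b1 b2] /andP[a1 a2].
  by exists (i + d); [exact: leq_addr | lia].
by exists (i + d).+1; lia.
Qed.

Lemma eventually_all_lt (P : nat -> nat -> nat -> Prop) (q : nat) :
  (forall k, (k < q)%N ->
     exists N, forall n m, (N <= n)%N -> (N <= m)%N -> P k n m) ->
  exists N, forall k, (k < q)%N ->
     forall n m, (N <= n)%N -> (N <= m)%N -> P k n m.
Proof.
elim: q => [|q IH] evP; first by exists 0%N.
have [N1 evP1] := IH (fun k kq => evP k (ltnW kq)).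
have [N2 evP2] := evP q (ltnSn q).
exists (maxn N1 N2) => k; rewrite ltnS leq_eqVlt => /predU1P[-> | kq] n m Nn Nm.
  by apply: evP2; lia.
by apply: evP1 => //; lia.
Qed.

Section Factors.
Variables (T : Type) (w : infword T).

Definition factor (t1 t2 : nat) : seq T := [seq w j | j <- iota t1 (t2 - t1)].

Lemma size_pref n : size (pref n w) = n.
Proof. by rewrite /pref size_map size_iota. Qed.

Lemma size_factor t1 t2 : size (factor t1 t2) = (t2 - t1)%N.
Proof. by rewrite /factor size_map size_iota. Qed.

Lemma pref_factor t1 t2 : (t1 <= t2)%N -> pref t2 w = pref t1 w ++ factor t1 t2.
Proof. by move=> t12; rewrite /pref /factor -map_cat -iotaD subnKC. Qed.

End Factors.

Section PrefixCount.
Variables (T : eqType) (a : T) (w : infword T).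

Definition pcount (n : nat) : nat := occ a (pref n w).

Lemma pcountS n : pcount n.+1 = (pcount n + (w n == a))%N.
Proof.
rewrite /pcount (pref_factor w (leqnSn n)) /occ count_cat /factor subSnn /=.
by rewrite addn0 eq_sym.
Qed.

Lemma pcount_le n : (pcount n <= n)%N.
Proof. by rewrite /pcount /occ -{2}(size_pref w n) count_size. Qed.

Lemma occ_factor t1 t2 : (t1 <= t2)%N ->
  occ a (factor w t1 t2) = (pcount t2 - pcount t1)%N.
Proof. by move=> t12; rewrite /pcount (pref_factor w t12) /occ count_cat addKn. Qed.

End PrefixCount.

Local Open Scope ring_scope.

Lemma rho_ratio (R : realType) (T : eqType) (a : T) (u : seq T) (k q : nat) :
  (0 < size u)%N -> (0 < q)%N -> (q * occ a u = k * size u)%N ->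
  rho R a u = k%:R / q%:R.
Proof.
move=> u0 q0 occ_u; rewrite /rho; apply/eqP.
by rewrite eqr_div ?pnatr_eq0 -?lt0n // -!natrM mulnC occ_u.
Qed.

Lemma rho_bool_compl (R : realType) (a b : bool) (u : seq bool) :
  b != a -> u != [::] -> rho R b u = 1 - rho R a u.
Proof.
move=> ba u0; have occ_ab : (occ b u + occ a u)%N = size u.
  rewrite /occ addnC -(count_predC (pred1 a) u); congr (_ + _)%N.
  by apply: eq_count => x /=; case: a b x ba => [] [] [].
have sz0 : (size u)%:R != 0 :> R by rewrite pnatr_eq0 size_eq0.
by apply/eqP; rewrite eq_sym subr_eq /rho -mulrDl -natrD occ_ab divff.
Qed.

Local Close Scope ring_scope.

Lemma weak_abelian_periodic_of_line (R : realType) (w : infword bool) (a : bool)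
    (q k r : nat) :
  (0 < q)%N -> (k <= q)%N ->
  infinitely_often (fun t => q * pcount a w t = k * t + r)%N ->
  weak_abelian_periodic R w.
Proof.
move=> q0 kq /infinitely_often_chain[T Tlt Tline].
pose v i := if i is j.+1 then factor w (T j) (T j.+1) else pref (T 0%N) w.
have size_v n : (\sum_(i < n.+1) size (v i))%N = T n.
  elim: n => [|n IH]; first by rewrite big_ord1 /= size_pref.
  by rewrite big_ord_recr /= IH size_factor subnKC // ltnW.
have flatten_v n : flatten [seq v i | i <- iota 0 n.+1] = pref (T n) w.
  elim: n => [|n IH]; first by rewrite /= cats0.
  by rewrite -addn1 iotaD map_cat flatten_cat IH /= cats0 -pref_factor // ltnW.
have v_nil i : (1 <= i)%N -> v i != [::].
  by case: i => // j _; rewrite -size_eq0 size_factor -lt0n subn_gt0.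
have rho_v i : (1 <= i)%N -> rho R a (v i) = (k%:R / q%:R)%R.
  case: i => // j _; apply: rho_ratio => //; first by rewrite size_factor subn_gt0.
  rewrite occ_factor ?size_factor ?(ltnW (Tlt j)) // !mulnBr (Tline j) (Tline j.+1).
  by rewrite subnDr.
exists v; split; [|split] => //; first by move=> n; rewrite size_v flatten_v.
move=> b i j i1 j1; have [->|ba] := eqVneq b a; first by rewrite !rho_v.
by rewrite !(rho_bool_compl R ba) ?v_nil ?rho_v.
Qed.

Lemma line_side_eventually_constant (R : realType) (w : infword bool) (a : bool)
    (q k : nat) :
  ~ weak_abelian_periodic R w -> (0 < q)%N -> (k <= q)%N ->
  exists N, forall n m, (N <= n)%N -> (N <= m)%N ->
    (k * n <= q * pcount a w n)%N = (k * m <= q * pcount a w m)%N.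
Proof.
move=> nwap q0 kq; apply: contra_notP nwap => not_ev.
have step_count t : (q * pcount a w t <= q * pcount a w t.+1 <= q * pcount a w t + q)%N.
  by rewrite pcountS mulnDr; case: (w t == a) => /=; lia.
have step_line t : (k * t <= k * t.+1 <= k * t + q)%N by rewrite mulnS; lia.
have window : infinitely_often (fun t =>
    exists2 r, (r < q)%N & (q * pcount a w t = k * t + r)%N).
  move=> N; apply: contra_notP not_ev => no_window; exists N.
  suff side_N j : (N <= j)%N ->
      (k * j <= q * pcount a w j)%N = (k * N <= q * pcount a w N)%N.
    by move=> n m Nn Nm; rewrite !side_N.
  move=> Nj; apply: contra_notP no_window => /eqP side_ch.
  have [|t Nt /andP[lo hi]] := crossing_window step_count step_line Nj.
    by rewrite eq_sym.
  by exists t => //; exists (q * pcount a w t - k * t)%N; lia.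
have [r _ r_inf] := infinitely_often_pigeonhole window.
exact: weak_abelian_periodic_of_line q0 kq r_inf.
Qed.

(* For [x <= q n], the ratio [x / (q n)] lies in [[K/q, (K+1)/q]] with
   [K = level q x n]; the cap at [q - 1] handles [x = q n]. *)
Definition level (q x n : nat) : nat := minn (x %/ n) q.-1.

Lemma level_bracket (q x n : nat) : (0 < n)%N -> (0 < q)%N -> (x <= q * n)%N ->
  (level q x n * n <= x <= (level q x n).+1 * n)%N.
Proof.
move=> n0 q0 xqn; apply/andP; split; first by rewrite -leq_divRL // geq_minl.
rewrite /level; case: (leqP (x %/ n) q.-1) => [_|_].
  exact: ltnW (ltn_ceil _ n0).
by rewrite prednK.
Qed.

Lemma level_le (q x y n m : nat) : (0 < n)%N -> (0 < m)%N ->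
  (forall k, 0 < k < q -> (k * n <= x) = (k * m <= y))%N ->
  (level q x n <= level q y m)%N.
Proof.
move=> n0 m0 sides; rewrite /level; set K := minn _ _.
have [->//|K0] := posnP K.
rewrite leq_min geq_minr andbT leq_divRL // -sides -?leq_divRL ?geq_minl //.
by rewrite K0 /K; lia.
Qed.

Local Open Scope ring_scope.

Lemma dist_ratio_le (R : realFieldType) (K x y n m : nat) :
  (0 < n)%N -> (0 < m)%N ->
  (K * n <= x <= K.+1 * n)%N -> (K * m <= y <= K.+1 * m)%N ->
  `|x%:R / n%:R - y%:R / m%:R| <= 1 :> R.
Proof.
have bracket (z d : nat) : (0 < d)%N -> (K * d <= z <= K.+1 * d)%N ->
    (K%:R : R) <= z%:R / d%:R /\ z%:R / d%:R <= (K%:R : R) + 1.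
  move=> d0 /andP[lo hi]; have d0' : (0 : R) < d%:R by rewrite ltr0n.
  by rewrite ler_pdivlMr // ler_pdivrMr // natr1 -!natrM !ler_nat.
move=> n0 m0 /(bracket _ _ n0)[x1 x2] /(bracket _ _ m0)[y1 y2].
rewrite ler_norml; apply/andP; split; lra.
Qed.

Lemma rho_pref_close (R : realType) (T : eqType) (a : T) (w : infword T)
    (q n m : nat) :
  (0 < q)%N -> (0 < n)%N -> (0 < m)%N ->
  (forall k, 0 < k < q ->
     (k * n <= q * pcount a w n) = (k * m <= q * pcount a w m))%N ->
  `|rho R a (pref n w) - rho R a (pref m w)| <= q%:R^-1.
Proof.
move=> q0 n0 m0 sides.
have count_le t : (q * pcount a w t <= q * t)%N by rewrite leq_mul2l pcount_le orbT.
have same_level : level q (q * pcount a w n) n = level q (q * pcount a w m) m.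
  by apply/eqP; rewrite eqn_leq !level_le // => k kq; rewrite sides.
have := level_bracket m0 q0 (count_le m); rewrite -same_level => bracket_m.
have := dist_ratio_le R n0 m0 (level_bracket n0 q0 (count_le n)) bracket_m.
have q0' : (0 : R) < q%:R by rewrite ltr0n.
rewrite !natrM -!mulrA -mulrBr normrM (ger0_norm (ltW q0')) => close.
by rewrite /rho !size_pref -[q%:R^-1]mulr1 ler_pdivlMl.
Qed.

Local Open Scope classical_set_scope.

Lemma cvg_seq_of_cauchy (R : realType) (u : nat -> R) :
  (forall e, 0 < e ->
     exists N, forall n m, (N <= n)%N -> (N <= m)%N -> `|u n - u m| < e) ->
  exists l : R, u @ \oo --> l.
Proof.
move=> u_cauchy; apply/cvg_ex/cauchy_cvgP/cauchy_ballP => e e0.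
rewrite near_map2; have [N uN] := u_cauchy e e0.
exists ([set n | (N <= n)%N], [set n | (N <= n)%N]); first by split; exists N.
by move=> [n m] /= [Nn Nm]; rewrite -ball_normE /= distrC; apply: uN.
Qed.

Theorem corollary1 (R : realType) (w : infword bool) :
  ~ weak_abelian_periodic R w -> forall a : bool, freq_exists R a w.
Proof.
move=> nwap a; apply: cvg_seq_of_cauchy => e e0.
have [q q0 qe] : exists2 q, (0 < q)%N & e^-1 < q%:R.
  have e_inv0 : 0 <= e^-1 by rewrite invr_ge0 ltW.
  exists (Num.Def.archi_bound e^-1).+1 => //.
  by apply: lt_le_trans (archi_boundP e_inv0) _; rewrite ler_nat.
have [N sides] := eventually_all_lt
  (fun k kq => line_side_eventually_constant a nwap q0 (ltnW kq)).
exists N => n m Nn Nm.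
apply: le_lt_trans (rho_pref_close R q0 (ltn0Sn n) (ltn0Sn m) _) _.
  by move=> k /andP[_ kq]; apply: sides => //; exact: leqW.
by rewrite invf_plt ?posrE ?ltr0n.
Qed.
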